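(* Let $(X,\mathscr{R})$ be a reaction network with stoichiometric matrix $S$, and let $x,y\in X$. Then $x\rightleftharpoons y$ if and only if $m_x=m_y$ for all $m\in\ker S^\top$.
   Context: A reaction network (RN) $(X,\mathscr{R})$ consists of a finite non-empty set $X$ of species and a finite non-empty set $\mathscr{R}$ of reactions. Each reaction $r$ is given by stoichiometric coefficients $s^-_{xr},s^+_{xr}\in\mathbb{N}_0$. The stoichiometric matrix $S\in\mathbb{Z}^{X\times\mathscr{R}}$ has entries $S_{xr}=s^+_{xr}-s^-_{xr}$. The paper assumes throughout that RNs are closed: every reaction $r$ has $x,y$ with $S_{xr}<0<S_{yr}$. A vector $v\in\mathbb{Z}^{\mathscr{R}}$ specifies a net isomerization reaction $kx\to ky$ if both of the following hold: - $k:=-[Sv]_x=[Sv]_y$ is a positive integer, for some $x,y\in X$; - $[Sv]_z=0$ for all $z\in X\setminus\{x,y\}$. Distinct $x,y\in X$ are obligatory isomers if some $v\in\mathbb{Z}^{\mathscr{R}}$ specifies a net isomerization reaction $kx\to ky$. Write $x\rightleftharpoons y$ if $x=y$ or $x,y$ are obligatory isomers. *)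

From HB Require Import structures.
From mathcomp Require Import all_boot all_order all_algebra.
From mathcomp Require Import reals.
Set Implicit Arguments. Unset Strict Implicit. Unset Printing Implicit Defensive.
Import Order.TTheory GRing.Theory Num.Theory.
Local Open Scope ring_scope.

(* A reaction network: species X, reactions Rn (finite types), with
   stoichiometric coefficients sm x r = s^-_{xr}, sp x r = s^+_{xr}. *)

Definition stoich (X Rn : finType) (sm sp : X -> Rn -> nat) (x : X) (r : Rn) : int :=
  (sp x r)%:Z - (sm x r)%:Z.

Definition closed_RN (X Rn : finType) (sm sp : X -> Rn -> nat) : Prop :=
  forall r : Rn, exists x y : X, stoich sm sp x r < 0 /\ 0 < stoich sm sp y r.

Definition Sv (X Rn : finType) (sm sp : X -> Rn -> nat) (v : Rn -> int) (x : X) : int :=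
  \sum_(r : Rn) stoich sm sp x r * v r.

Definition specifies_net_isom (X Rn : finType) (sm sp : X -> Rn -> nat)
    (v : Rn -> int) (k : int) (x y : X) : Prop :=
  [/\ 0 < k, - Sv sm sp v x = k, Sv sm sp v y = k &
      forall z : X, z != x -> z != y -> Sv sm sp v z = 0].

Definition obligatory_isomers (X Rn : finType) (sm sp : X -> Rn -> nat) (x y : X) : Prop :=
  x != y /\ exists (v : Rn -> int) (k : int), specifies_net_isom sm sp v k x y.

Definition isom_rel (X Rn : finType) (sm sp : X -> Rn -> nat) (x y : X) : Prop :=
  x = y \/ obligatory_isomers sm sp x y.

Definition in_ker_ST (R : realType) (X Rn : finType) (sm sp : X -> Rn -> nat)
    (m : X -> R) : Prop :=
  forall r : Rn, \sum_(x : X) (stoich sm sp x r)%:~R * m x = 0.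

(** The map m |-> m x - m y vanishes on ker S^T exactly when the vector
    e_y - e_x lies in the image of S, by the Fredholm alternative.  Over the
    rationals a preimage exists as soon as it exists over R (rational test
    vectors embed into R), and clearing denominators turns a rational preimage
    w into an integer one v = K w with S v = K (e_y - e_x), K > 0: a net
    isomerization K x -> K y.  Conversely, pairing such a v with m in ker S^T
    gives K (m y - m x) = 0. *)
From HB Require Import structures.
From mathcomp Require Import all_boot all_order all_algebra.
From mathcomp Require Import reals.
Set Implicit Arguments. Unset Strict Implicit. Unset Printing Implicit Defensive.
Import Order.TTheory GRing.Theory Num.Theory.

Section FredholmAlternative.
Local Open Scope ring_scope.
Variable F : fieldType.

Lemma submx_of_orth m n (B : 'M[F]_(m, n)) (b : 'rV_n) :
  (forall c : 'cV_n, B *m c = 0 -> b *m c = 0) -> (b <= B)%MS.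
Proof.
move=> orthb; rewrite submxE; apply/eqP/matrixP => i j.
have mul_col p (A : 'M_(p, n)) : A *m col j (cokermx B) = col j (A *m cokermx B).
  by rewrite !colE mulmxA.
have B_col : B *m col j (cokermx B) = 0 by rewrite mul_col mulmx_coker col0.
have /matrixP/(_ i 0) := orthb _ B_col.
by rewrite mul_col !mxE.
Qed.

Lemma solvable_of_orth (I J : finType) (A : J -> I -> F) (b : I -> F) :
  (forall m : I -> F, (forall j, \sum_i A j i * m i = 0) -> \sum_i b i * m i = 0) ->
  exists w : J -> F, forall i, \sum_j w j * A j i = b i.
Proof.
move=> orthb.
pose B : 'M[F]_(#|J|, #|I|) := \matrix_(j, i) A (enum_val j) (enum_val i).
pose c_of (c : 'cV[F]_#|I|) i : F := c (enum_rank i) 0.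
have mulB c j : (B *m c) j 0 = \sum_i A (enum_val j) i * c_of c i.
  by rewrite mxE [RHS]big_enum_val; apply: eq_bigr => k _; rewrite /c_of mxE enum_valK.
have /submxP[w Bw] : ((\row_i b (enum_val i)) <= B)%MS.
  apply: submx_of_orth => c Bc; apply/matrixP => ? k; rewrite !ord1 !mxE.
  transitivity (\sum_i b i * c_of c i).
    by rewrite [RHS]big_enum_val; apply: eq_bigr => i _; rewrite mxE /c_of enum_valK.
  by apply: orthb => j; rewrite -[j]enum_rankK -mulB Bc mxE.
exists (fun j => w 0 (enum_rank j)) => i.
have /matrixP/(_ 0 (enum_rank i)) := Bw; rewrite !mxE enum_rankK => ->.
by rewrite [LHS]big_enum_val; apply: eq_bigr => j _; rewrite /B mxE enum_rankK enum_valK.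
Qed.

End FredholmAlternative.

Section ClearDenominators.
Local Open Scope ring_scope.

Lemma rat_scale_int (I : finType) (w : I -> rat) :
  exists2 K : int, 0 < K & exists v : I -> int, forall i, (v i)%:~R = K%:~R * w i.
Proof.
exists (\prod_i denq (w i)); first by apply: prodr_gt0 => i _; apply: denq_gt0.
exists (fun i => numq (w i) * \prod_(j | j != i) denq (w j)) => i.
by rewrite [in RHS](bigD1 i) //= !intrM numqE [RHS]mulrC mulrA.
Qed.

End ClearDenominators.

Section Network.
Local Open Scope ring_scope.
Variables (X Rn : finType) (sm sp : X -> Rn -> nat).

Definition stoich_orth (F : pzRingType) (m : X -> F) : Prop :=
  forall r, \sum_x (stoich sm sp x r)%:~R * m x = 0.

Lemma Sv_orth (F : comPzRingType) (m : X -> F) (v : Rn -> int) :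
  stoich_orth m -> \sum_z (Sv sm sp v z)%:~R * m z = 0.
Proof.
move=> orthm; under eq_bigr => z _ do rewrite /Sv rmorph_sum big_distrl /=.
rewrite exchange_big big1 // => r _ /=.
under eq_bigr => z _ do rewrite intrM mulrAC.
by rewrite -big_distrl /= orthm mul0r.
Qed.

Lemma sum_diff_indicator (F : pzRingType) (m : X -> F) x y : x != y ->
  \sum_z ((z == y)%:R - (z == x)%:R) * m z = m y - m x.
Proof.
move=> nxy; rewrite (bigD1 y) // (bigD1 x) //= big1.
  by rewrite !eqxx (negbTE nxy) eq_sym (negbTE nxy) /= subr0 sub0r addr0 mul1r mulN1r.
by move=> z /andP[/negbTE-> /negbTE->]; rewrite subrr mul0r.
Qed.

Lemma specifies_net_isomE v k x y : x != y ->
  specifies_net_isom sm sp v k x y <->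
  0 < k /\ forall z, Sv sm sp v z = k * ((z == y)%:R - (z == x)%:R).
Proof.
move=> nxy; split=> [[k_gt0 Svx Svy Sv0] | [k_gt0 Sv_diff]].
  split=> // z; have [-> | zy] := eqVneq z y.
    by rewrite eq_sym (negbTE nxy) Svy /= subr0 mulr1.
  have [-> | zx] := eqVneq z x; first by rewrite -Svx /= sub0r mulrN1 opprK.
  by rewrite Sv0 //= subrr mulr0.
split=> // [||z zx zy]; rewrite Sv_diff.
- by rewrite eqxx (negbTE nxy) /= sub0r mulrN1 opprK.
- by rewrite eqxx eq_sym (negbTE nxy) /= subr0 mulr1.
- by rewrite (negbTE zx) (negbTE zy) /= subrr mulr0.
Qed.

Lemma net_isom_orth_eq (F : numDomainType) (m : X -> F) v k x y :
  x != y -> specifies_net_isom sm sp v k x y -> stoich_orth m -> m x = m y.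
Proof.
move=> nxy /(specifies_net_isomE _ _ nxy)[k_gt0 Sv_diff] orthm.
apply/eqP; rewrite eq_sym -subr_eq0.
have := Sv_orth v orthm.
under eq_bigr => z _ do rewrite Sv_diff intrM rmorphB /= !rmorph_nat -mulrA.
rewrite -big_distrr /= sum_diff_indicator // => /eqP.
by rewrite mulf_eq0 intr_eq0 gt_eqF.
Qed.

Lemma net_isom_of_rat_orth x y : x != y ->
  (forall m : X -> rat, stoich_orth m -> m x = m y) ->
  exists v k, specifies_net_isom sm sp v k x y.
Proof.
move=> nxy orth_eq; pose e z : rat := (z == y)%:R - (z == x)%:R.
have [w Sw] : exists w : Rn -> rat, forall z, \sum_r w r * (stoich sm sp z r)%:~R = e z.
  apply: solvable_of_orth => m orthm.
  by rewrite /e sum_diff_indicator // (orth_eq m orthm) subrr.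
have [K K_gt0 [v Kw]] := rat_scale_int w.
exists v, K; apply/specifies_net_isomE => //; split=> // z.
apply: (@intr_inj rat); rewrite intrM rmorphB /= !rmorph_nat -/(e z) -Sw.
rewrite /Sv rmorph_sum mulr_sumr; apply: eq_bigr => r _ /=.
by rewrite intrM Kw mulrCA (mulrC (w r)).
Qed.

Lemma ratr_orth (R : numFieldType) (m : X -> rat) :
  stoich_orth m -> stoich_orth (fun z => ratr (m z) : R).
Proof.
move=> orthm r.
transitivity (ratr (\sum_z (stoich sm sp z r)%:~R * m z) : R).
  by rewrite rmorph_sum; apply: eq_bigr => z _; rewrite rmorphM /= ratr_int.
by rewrite orthm rmorph0.
Qed.

End Network.

Theorem theorem6 (R : realType) (X Rn : finType) (sm sp : X -> Rn -> nat)
    (hX : 0 < #|X|) (hRn : 0 < #|Rn|) (hclosed : closed_RN sm sp) (x y : X) :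
  isom_rel sm sp x y <->
  (forall m : X -> R, in_ker_ST sm sp m -> m x = m y).
Proof.
split=> [[-> // | [nxy [v [k isom_v]]]] m | orth_eq].
  exact: net_isom_orth_eq nxy isom_v.
have [-> | nxy] := eqVneq x y; [by left | right; split=> //].
apply: net_isom_of_rat_orth nxy _ => m /(ratr_orth R) /orth_eq.
exact: (fmorph_inj (@ratr R)).
Qed.
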